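(* Let $K$ be a field, $\kappa$ an infinite cardinal, and $\mathcal R=(R_\beta\mid\beta<\kappa)$ a sequence of semiartinian $K$-algebras each of which has a conormed multiplicative basis. Then $R=R(\kappa,K,\mathcal R)$ has a conormed multiplicative basis. If moreover $R_0$ possesses a conormed strong multiplicative basis $B_0$ containing a non-zero idempotent $e\in\mathrm{Soc}(R_0)$, then $R$ has a conormed strong multiplicative basis. In particular, the $K$-algebra $R(\kappa,K)$ of all sequences in $K^\kappa$ that are constant except for finitely many terms has a conormed strong multiplicative basis.
   Context: $R(\kappa,K,\mathcal R)$ denotes the $K$-subalgebra $I\oplus1_P\cdot K$ of $P=\prod_{\beta<\kappa}R_\beta$, where $I=\bigoplus_{\beta<\kappa}R_\beta$. Socle sequence: $S_0=0$, $S_{\alpha+1}/S_\alpha=\mathrm{Soc}(R/S_\alpha)$, unions at limits; semiartinian of Loewy length $\sigma+1$ means $S_{\sigma+1}=R\ne S_\sigma$. A $K$-linear basis $B$ is multiplicative if for all $b,b'\in B$ either $bb'=0$ or $bb'\in B$, strong multiplicative if $bb'\in B$ for all $b,b'\in B$. A basis $B$ of a semiartinian $K$-algebra of Loewy length $\sigma+1$ is conormed if $B$ contains a $K$-basis of $S_\alpha$ for each $\alpha\le\sigma$. *)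

From HB Require Import structures.
From Stdlib Require List.
From mathcomp Require Import all_boot all_algebra.

Set Implicit Arguments.
Unset Strict Implicit.
Unset Printing Implicit Defensive.

Import GRing.Theory.
Local Open Scope ring_scope.

(* A K-algebra presented concretely: its elements are the [x : kcar] with
   [kin x]; operations are zero, addition, multiplication and K-scaling.
   This lets us treat uniformly an abstract [algType K] (kin = everything)
   and the subalgebra R(kappa,K,R) of the (dependent) product. *)
Record kalg (K : fieldType) := KAlg {
  kcar : Type;
  kin : kcar -> Prop;
  kzero : kcar;
  kadd : kcar -> kcar -> kcar;
  kmul : kcar -> kcar -> kcar;
  kscale : K -> kcar -> kcar }.
Arguments kcar {K} k.
Arguments kin {K} k _.
Arguments kzero {K} k.
Arguments kadd {K} k _ _.
Arguments kmul {K} k _ _.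
Arguments kscale {K} k _ _.

Section Notions.
Variables (K : fieldType) (A : kalg K).
Local Notation T := (kcar A).
Local Notation kset := (T -> Prop).

Definition ksubset (X Y : kset) : Prop := forall x, X x -> Y x.

Definition ksum (s : seq T) : T := foldr (kadd A) (kzero A) s.

Definition right_ideal (J : kset) : Prop :=
  [/\ ksubset J (kin A), J (kzero A),
      (forall x y, J x -> J y -> J (kadd A x y)),
      (forall (k : K) x, J x -> J (kscale A k x)) &
      (forall x r, J x -> kin A r -> J (kmul A x r))].

(* J is a right ideal containing S with J/S a simple right A-module
   (i.e. a minimal non-zero submodule of A/S) *)
Definition minimal_over (S J : kset) : Prop :=
  [/\ right_ideal J, ksubset S J, (exists x, J x /\ ~ S x) &
      (forall J', right_ideal J' -> ksubset S J' -> ksubset J' J ->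
                  ksubset J' S \/ ksubset J J')].

(* preimage in A of Soc(A/S) (right socle: sum of simple right submodules) *)
Definition socle_next (S : kset) : kset := fun x =>
  exists y, S y /\
  exists l : seq (kset * T),
    (forall p, List.In p l -> minimal_over S p.1 /\ p.1 p.2) /\
    x = kadd A y (ksum (map snd l)).

(* The terms S_alpha of the socle sequence: S_0 = 0, S_(alpha+1) = socle_next
   S_alpha, unions at limits.  Without an ordinal library, the class
   {S_alpha | alpha ordinal} is described as the least class containing 0,
   closed under the successor step and under unions of nonempty subfamilies
   (the S_alpha form an increasing chain, so such a union is again some
   S_beta). *)
Inductive socle_term : kset -> Prop :=
  | socle_term0 : socle_term (fun x => x = kzero A)
  | socle_termS S : socle_term S -> socle_term (socle_next S)
  | socle_termU (J : Type) (f : J -> kset) :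
      inhabited J -> (forall j, socle_term (f j)) ->
      socle_term (fun x => exists j, f j x).

Definition semiartinian : Prop :=
  exists S, socle_term S /\ forall x, S x <-> kin A x.

Definition kspan (B : kset) : kset := fun x =>
  exists l : seq (K * T),
    (forall p, List.In p l -> B p.2) /\
    x = ksum (map (fun p => kscale A p.1 p.2) l).

Definition kindependent (B : kset) : Prop :=
  forall l : seq (K * T),
    List.NoDup (map snd l) ->
    (forall p, List.In p l -> B p.2) ->
    ksum (map (fun p => kscale A p.1 p.2) l) = kzero A ->
    forall p, List.In p l -> p.1 = 0.

Definition basis_of (S B : kset) : Prop :=
  [/\ ksubset B S, kindependent B & forall x, S x <-> kspan B x].

Definition kbasis (B : kset) : Prop := basis_of (kin A) B.

Definition conormed (B : kset) : Prop :=
  kbasis B /\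
  forall S, socle_term S -> exists B', ksubset B' B /\ basis_of S B'.

Definition multiplicative (B : kset) : Prop :=
  forall b b', B b -> B b' -> kmul A b b' = kzero A \/ B (kmul A b b').

Definition strong_multiplicative (B : kset) : Prop :=
  forall b b', B b -> B b' -> B (kmul A b b').

End Notions.

Definition alg_kalg (K : fieldType) (A : algType K) : kalg K :=
  @KAlg K A (fun _ => True) 0 +%R *%R *:%R.

(* R(kappa,K,R) = (direct sum of the R_i) + K.1 inside the product of the R_i:
   the elements x of the product that are equal to k.1 outside a finite set
   of indices, for some k in K. *)
Definition Rk (K : fieldType) (I : Type) (R : I -> algType K) : kalg K :=
  @KAlg K (forall i, R i)
    (fun x => exists k : K, exists s : seq I,
        forall i, ~ List.In i s -> x i = k%:A)
    (fun i => 0)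
    (fun x y i => x i + y i)
    (fun x y i => x i * y i)
    (fun k x i => k *: x i).

Definition infinite_type (I : Type) : Prop :=
  exists f : nat -> I, injective f.

From Pilot Require Import Defs.
From Stdlib Require Import Classical ClassicalEpsilon FunctionalExtensionality PropExtensionality.
From Stdlib Require FinFun.
From mathcomp Require Import all_boot all_algebra.

(* The socle terms of any algebra form a chain: a socle step never jumps over
   another socle term.  For R = R(kappa,K,R), let emb embed R_i into the
   product and let [slice S i] be the preimage of S in R_i.  Along the socle
   sequence every term S of R is described coordinatewise: x is in S iff each
   x_i is in the socle term [slice S i] of R_i and either x lies in the direct
   sum I or S does not.  The socle step turns every slice into the next socle
   term of R_i, and S leaves I exactly one step after almost all of its slices
   contain 1.  Hence a single finite set F of indices works for all terms that
   are not contained in I: outside F all their slices contain 1.  The union of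
   the embedded bases B_i with the indicator [one_off F] of the complement of F
   is then a conormed multiplicative basis.  For a strong basis take F
   containing the index i0 carrying B0 and e, use B0 at i0, and replace each
   other basis element p (which vanishes at i0) by p + emb e.  As e lies in
   Soc(R_i0), emb e lies in every nonzero socle term of R; as e is idempotent,
   products that used to vanish now equal emb e.  The last claim is the case
   R_i = K, with basis {1}. *)

Module ConormedBases.

Set Implicit Arguments.
Unset Strict Implicit.
Unset Printing Implicit Defensive.

Import GRing.Theory.
Local Open Scope ring_scope.

Lemma pred_ext (T : Type) (X Y : T -> Prop) :
  (forall x, X x -> Y x) -> (forall x, Y x -> X x) -> X = Y.
Proof.
move=> XY YX; apply: functional_extensionality => x.
by apply: propositional_extensionality; split; [apply: XY | apply: YX].
Qed.

Lemma not_ksubset (K : fieldType) (A : kalg K) (X Y : kcar A -> Prop) :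
  ~ ksubset X Y -> exists x, X x /\ ~ Y x.
Proof.
move=> nXY; apply: NNPP => nex; apply: nXY => x Xx.
by apply: NNPP => nYx; apply: nex; exists x.
Qed.

Lemma infinite_type_fresh (I : Type) : infinite_type I ->
  forall s : seq I, exists i, ~ List.In i s.
Proof.
case=> f f_inj s; apply: NNPP => nfresh.
have s_full i : List.In i s by apply: NNPP => nsi; apply: nfresh; exists i.
have nd : List.NoDup (List.map f (List.seq 0 (size s).+1)).
  apply: FinFun.Injective_map_NoDup; last exact: List.seq_NoDup.
  by move=> a b; apply: f_inj.
have := List.NoDup_incl_length nd (fun x _ => s_full x).
by rewrite List.length_map List.length_seq => /leP; rewrite ltnn.
Qed.

Lemma notin_cat_l (T : Type) (s s' : seq T) x : ~ List.In x (s ++ s') -> ~ List.In x s.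
Proof. by move=> nx xs; apply: nx; apply: List.in_or_app; left. Qed.

Lemma notin_cat_r (T : Type) (s s' : seq T) x : ~ List.In x (s ++ s') -> ~ List.In x s'.
Proof. by move=> nx xs; apply: nx; apply: List.in_or_app; right. Qed.

Definition asbool (P : Prop) : bool := if excluded_middle_informative P then true else false.

Lemma asboolP (P : Prop) : reflect P (asbool P).
Proof. by rewrite /asbool; case: excluded_middle_informative => ?; constructor. Qed.

Lemma relation_image_list (X Y : Type) (r : X -> Y -> Prop) (l : seq X) :
  (forall x y y', r x y -> r x y' -> y = y') ->
  exists L : seq Y, forall x y, List.In x l -> r x y -> List.In y L.
Proof.
move=> r_fun; elim: l => [|x l [L lL]]; first by exists [::].
case: (classic (exists y, r x y)) => [[y xy] | nxy].
  exists (y :: L) => x' y' [<- | lx'] ry'; first by left; apply: r_fun xy ry'.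
  by right; apply: lL ry'.
exists L => x' y' [<- | lx'] ry'; [by case: nxy; exists y' | exact: lL ry'].
Qed.

Lemma dependent_choice (I : Type) (T : I -> Type) (P : forall i, T i -> Prop) :
  (forall i, exists x, P i x) -> exists f : forall i, T i, forall i, P i (f i).
Proof.
move=> exP; exists (fun i => proj1_sig (constructive_indefinite_description _ (exP i))).
by move=> i; apply: proj2_sig.
Qed.

(** * Socle sequences *)

Section SocleChain.
Variables (K : fieldType) (A : kalg K).
Local Notation kset := (kcar A -> Prop).
Local Notation zero := (fun x => x = kzero A).
Hypothesis kaddr0 : forall x, kadd A x (kzero A) = x.

Lemma socle_term_has0 (S : kset) : socle_term S -> S (kzero A).
Proof.
elim=> {S} [//| S _ IH | J f [j] _ IH]; last by exists j; apply: IH.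
by exists (kzero A); split=> //; exists [::]; split=> //=; rewrite /ksum /= kaddr0.
Qed.

Lemma socle_next_sup (S : kset) : ksubset S (socle_next S).
Proof.
by move=> x Sx; exists x; split=> //; exists [::]; split=> //=; rewrite /ksum /= kaddr0.
Qed.

(* The socle step cannot jump over a socle term: this is what makes the
   socle terms a chain although unions over arbitrary families are allowed. *)
Definition socle_normal (C : kset) : Prop :=
  forall X, socle_term X -> ksubset X C -> ~ ksubset C X -> ksubset (socle_next X) C.

Lemma socle_term_sub_or_sup (C : kset) : socle_term C -> socle_normal C ->
  forall X, socle_term X -> ksubset X C \/ ksubset (socle_next C) X.
Proof.
move=> stC nC X; elim=> {X} [| Y stY IH | J f [j] stf IH].
- by left=> x ->; apply: socle_term_has0.
- case: IH => [YC | CY]; last by right=> x /CY; apply: socle_next_sup.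
  case: (classic (ksubset C Y)) => [CY | nCY]; last by left; apply: nC.
  by right; rewrite (pred_ext YC CY).
- case: (classic (exists j, ksubset (socle_next C) (f j))) => [[j' Cf] | nCf].
    by right=> x /Cf fx; exists j'.
  left=> x [j' fx]; case: (IH j') => [/(_ x fx) // | Cf].
  by case: nCf; exists j'.
Qed.

Lemma socle_term_normal (C : kset) : socle_term C -> socle_normal C.
Proof.
elim=> {C} [| D stD IH | J f [j] stf IH] X stX XC nCX.
- by case: nCX => x ->; apply: socle_term_has0.
- case: (socle_term_sub_or_sup stD IH stX) => [XD | DX]; last by case: nCX.
  case: (classic (ksubset D X)) => [DX | nDX]; first by rewrite (pred_ext XD DX).
  by move=> x /(IH X stX XD nDX); apply: socle_next_sup.
- have [x [[j' fx] nXx]] := not_ksubset nCX.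
  case: (socle_term_sub_or_sup (stf j') (IH j') stX) => [Xf | fX].
    have nfX : ~ ksubset (f j') X by move=> fX; apply: nXx; apply: fX.
    by move=> y /(IH j' X stX Xf nfX) fy; exists j'.
  by case: nXx; apply: fX; apply: socle_next_sup.
Qed.

Lemma socle_term_total (X Y : kset) : socle_term X -> socle_term Y ->
  ksubset X Y \/ ksubset Y X.
Proof.
move=> stX stY; case: (socle_term_sub_or_sup stY (socle_term_normal stY) stX) => YX.
  by left.
by right=> x /socle_next_sup /YX.
Qed.

Lemma socle_term_sub_fixpoint (S : kset) : socle_term S ->
  ksubset (socle_next S) S -> forall X, socle_term X -> ksubset X S.
Proof.
move=> stS fixS X; elim=> {X} [| X stX IH | J f _ _ IH].
- by move=> x ->; apply: socle_term_has0.
- case: (classic (ksubset S X)) => [SX | nSX]; first by rewrite (pred_ext IH SX).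
  exact: (socle_term_normal stS stX IH nSX).
- by move=> x [j fx]; apply: (IH j).
Qed.

Lemma socle_next0_sub (S : kset) : socle_term S -> ~ ksubset S zero ->
  ksubset (socle_next zero) S.
Proof.
move=> stS nS0; apply: (socle_term_normal stS (socle_term0 A)) => // x ->.
exact: socle_term_has0.
Qed.

Lemma socle_next_ind (S X : kset) : X (kzero A) ->
  (forall x y, X x -> X y -> X (kadd A x y)) -> ksubset S X ->
  (forall J, minimal_over S J -> ksubset J X) -> ksubset (socle_next S) X.
Proof.
move=> X0 XD SX JX _ [y [Sy [l [lmin ->]]]]; apply: (XD); first exact: SX.
elim: l lmin => [|p l IH] lmin //=; have [Jmin Jp] := lmin p (or_introl erefl).
by apply: (XD); [apply: JX Jmin _ Jp | apply: IH => q lq; apply: lmin; right].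
Qed.

End SocleChain.

Record kalg_laws (K : fieldType) (A : kalg K) : Prop := KalgLaws {
  kin0 : kin A (kzero A);
  kinD : forall x y, kin A x -> kin A y -> kin A (kadd A x y);
  kaddr0 : forall x, kadd A x (kzero A) = x;
  kaddA : forall x y z, kadd A x (kadd A y z) = kadd A (kadd A x y) z;
  kaddC : forall x y, kadd A x y = kadd A y x;
  kmulDl : forall x y r, kmul A (kadd A x y) r = kadd A (kmul A x r) (kmul A y r);
  kmul0l : forall r, kmul A (kzero A) r = kzero A;
  kscaleDr : forall k x y, kscale A k (kadd A x y) = kadd A (kscale A k x) (kscale A k y);
  kscaler0 : forall k, kscale A k (kzero A) = kzero A;
  kscaleA : forall k k' x, kscale A k (kscale A k' x) = kscale A (k * k') x;
  kscale1 : forall x, kscale A 1 x = x }.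

Section SocleIdeal.
Variables (K : fieldType) (A : kalg K).
Hypothesis AL : kalg_laws A.
Local Notation kset := (kcar A -> Prop).

Lemma ksum_cat (l l' : seq (kcar A)) : ksum (l ++ l') = kadd A (ksum l) (ksum l').
Proof.
elim: l => [|a l IH] /=; first by rewrite /ksum /= kaddC // kaddr0.
by rewrite /ksum /= -/(ksum _) IH kaddA.
Qed.

Lemma minimal_over_sub_socle_next (S J : kset) : S (kzero A) -> minimal_over S J ->
  ksubset J (socle_next S).
Proof.
move=> S0 Jmin x Jx; exists (kzero A); split=> //; exists [:: (J, x)].
by split; [move=> p [<- | []] | rewrite /ksum /= kaddr0 // kaddC // kaddr0].
Qed.

Lemma socle_next_right_ideal (S : kset) : right_ideal S -> right_ideal (socle_next S).
Proof.
case=> Sin S0 SD SZ SM.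
have NS : ksubset S (socle_next S) := socle_next_sup (kaddr0 AL) (S := S).
have NJ J : minimal_over S J -> ksubset J (socle_next S) := minimal_over_sub_socle_next S0.
have ND x y : socle_next S x -> socle_next S y -> socle_next S (kadd A x y).
  move=> [x' [Sx' [l [lmin ->]]]] [y' [Sy' [l' [lmin' ->]]]].
  exists (kadd A x' y'); split; first exact: SD.
  exists (l ++ l'); split.
    by move=> p /(List.in_app_or l l') [] ?; [apply: lmin | apply: lmin'].
  rewrite map_cat ksum_cat !kaddA //; congr (kadd A _ _).
  by rewrite -!kaddA //; congr (kadd A _ _); apply: kaddC.
split=> //.
- apply: socle_next_ind; [exact: kin0 | exact: kinD | exact: Sin |].
  by move=> J [[Jin _ _ _ _] _ _ _].
- exact: NS _ S0.
- move=> k; apply: (socle_next_ind (X := fun x => socle_next S (kscale A k x))).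
  + by rewrite kscaler0 //; apply: NS.
  + by move=> x y Nx Ny; rewrite kscaleDr //; apply: ND.
  + by move=> x Sx; apply: NS; apply: SZ.
  + by move=> J Jmin x Jx; apply: (NJ J Jmin); case: Jmin => [[_ _ _ JZ _] _ _ _]; apply: JZ.
- move=> x r Nx rin; move: x Nx.
  apply: (socle_next_ind (X := fun x => socle_next S (kmul A x r))).
  + by rewrite kmul0l //; apply: NS.
  + by move=> x y Nx Ny; rewrite kmulDl //; apply: ND.
  + by move=> x Sx; apply: NS; apply: SM.
  + by move=> J Jmin x Jx; apply: (NJ J Jmin); case: Jmin => [[_ _ _ _ JM] _ _ _]; apply: JM.
Qed.

Lemma socle_term_right_ideal (S : kset) : socle_term S -> right_ideal S.
Proof.
elim=> {S} [| S _ IH | J f [j] stf IH].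
- split=> //.
  + by move=> x ->; apply: kin0.
  + by move=> x y -> ->; rewrite kaddr0.
  + by move=> k x ->; rewrite kscaler0.
  + by move=> x r -> _; rewrite kmul0l.
- exact: socle_next_right_ideal.
- split.
  + by move=> x [j' fx]; case: (IH j') => + _ _ _ _; apply.
  + by exists j; apply: socle_term_has0 (kaddr0 AL) _ _.
  + move=> x y [j1 fx] [j2 fy].
    case: (socle_term_total (kaddr0 AL) (stf j1) (stf j2)) => f12.
      by exists j2; case: (IH j2) => _ _ + _ _; apply=> //; apply: f12.
    by exists j1; case: (IH j1) => _ _ + _ _; apply=> //; apply: f12.
  + by move=> k x [j' fx]; exists j'; case: (IH j') => _ _ _ + _; apply.
  + by move=> x r [j' fx] rin; exists j'; case: (IH j') => _ _ _ _; apply.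
Qed.

End SocleIdeal.

Section AlgebraFacts.
Variables (K : fieldType) (B : algType K).
Local Notation AB := (alg_kalg B).

Lemma alg_kalg_laws : kalg_laws AB.
Proof.
split=> //=.
- exact: addr0.
- exact: addrA.
- exact: addrC.
- exact: mulrDl.
- exact: mul0r.
- exact: scalerDr.
- exact: scaler0.
- exact: scalerA.
- exact: scale1r.
Qed.

Lemma alg_socle_term_right_ideal (S : B -> Prop) :
  socle_term (A := AB) S -> right_ideal (A := AB) S.
Proof. by move=> stS; apply: (socle_term_right_ideal alg_kalg_laws stS). Qed.

Lemma right_idealB (S : B -> Prop) : right_ideal (A := AB) S ->
  forall x y, S x -> S y -> S (x - y).
Proof. by case=> _ _ SD SZ _ x y Sx Sy; rewrite -scaleN1r; apply: SD => //; apply: SZ. Qed.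

Lemma right_ideal_full (S : B -> Prop) : right_ideal (A := AB) S -> S 1 -> forall y, S y.
Proof. by case=> _ _ _ _ SM S1 y; rewrite -(mul1r y); apply: SM. Qed.

Lemma right_ideal_unit_scale (S : B -> Prop) (k : K) : right_ideal (A := AB) S ->
  k != 0 -> S k%:A -> S 1.
Proof. by case=> _ _ _ SZ _ k0 /(SZ k^-1) /=; rewrite scalerA mulVf // scale1r. Qed.

Lemma alg_ksum_scale (l : seq (K * B)) :
  ksum (A := AB) (map (fun p => kscale AB p.1 p.2) l) = \sum_(p <- l) p.1 *: p.2.
Proof. by elim: l => [|q l IH]; rewrite ?big_nil ?big_cons //= -IH. Qed.

Lemma kindependent_one : kindependent (A := AB) (fun b => b = 1).
Proof.
case=> [|q [|q' l]] nd l1 + p lp; first by [].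
  by case: lp => [<- | []]; rewrite alg_ksum_scale big_seq1 (l1 q (or_introl erefl)) => /eqP;
    rewrite scaler_eq0 oner_eq0 orbF => /eqP.
move: nd => /= /List.NoDup_cons_iff [nq _]; case: nq; left.
by rewrite (l1 q (or_introl erefl)) (l1 q' (or_intror (or_introl erefl))).
Qed.

Lemma kindependent_neq0 (X : B -> Prop) b : kindependent (A := AB) X -> X b -> b != 0.
Proof.
move=> Xind Xb; apply/negP => /eqP b0; move/eqP: (oner_neq0 K); apply.
apply: (Xind [:: (1, b)] _ _ _ (1, b) (or_introl erefl)).
- by constructor; [case | constructor].
- by move=> p [<- | []].
- by rewrite alg_ksum_scale big_seq1 b0 scaler0.
Qed.

End AlgebraFacts.

Section Spans.
Variables (K : fieldType) (A : kalg K).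
Local Notation kset := (kcar A -> Prop).

Lemma kspan_sub (X Y : kset) : Y (kzero A) ->
  (forall a b, Y a -> Y b -> Y (kadd A a b)) -> (forall k a, Y a -> Y (kscale A k a)) ->
  ksubset X Y -> ksubset (kspan X) Y.
Proof.
move=> Y0 YD YZ XY _ [l [lX ->]]; elim: l lX => [|q l IH] lX //=.
by apply: YD; [apply: YZ; apply: XY; apply: lX; left | apply: IH => p lp; apply: lX; right].
Qed.

Lemma kspan_mono (X Y : kset) : ksubset X Y -> ksubset (kspan X) (kspan Y).
Proof. by move=> XY _ [l [lX ->]]; exists l; split=> // p /lX /XY. Qed.

Lemma kindependent_sub (X Y : kset) : ksubset Y X -> kindependent X -> kindependent Y.
Proof. by move=> YX Xind l nd lY; apply: Xind => // p /lY /YX. Qed.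

Lemma kspan0 (X : kset) : kspan X (kzero A).
Proof. by exists [::]. Qed.

Hypothesis AL : kalg_laws A.

Lemma kspanD (X : kset) a b : kspan X a -> kspan X b -> kspan X (kadd A a b).
Proof.
move=> [l [lX ->]] [l' [l'X ->]]; exists (l ++ l'); split; last by rewrite map_cat ksum_cat.
by move=> p /(List.in_app_or l l') [] ?; [apply: lX | apply: l'X].
Qed.

Lemma kspanZ (X : kset) k a : kspan X a -> kspan X (kscale A k a).
Proof.
move=> [l [lX ->]]; exists (map (fun p => (k * p.1, p.2)) l); split.
  by move=> _ /List.in_map_iff [q [<- lq]]; apply: (lX q lq).
elim: l {lX} => [|q l IH] /=; first by rewrite kscaler0.
by rewrite /ksum /= -!/(ksum _) -IH kscaleDr // kscaleA.
Qed.

Lemma kspan_base (X : kset) b : X b -> kspan X b.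
Proof.
by move=> Xb; exists [:: (1, b)]; split; [move=> p [<- | []] | rewrite /ksum /= kaddr0 // kscale1].
Qed.

Lemma conormed_of_spans (B : kset) : semiartinian A -> ksubset B (kin A) -> kindependent B ->
  (forall S, socle_term S -> ksubset S (kspan (fun b => B b /\ S b))) -> conormed B.
Proof.
move=> [top [sttop topE]] Bin Bind Sspan.
have span_in (S : kset) : socle_term S -> ksubset (kspan (fun b => B b /\ S b)) S.
  move=> stS; have [_ S0 SD SZ _] := socle_term_right_ideal AL stS.
  by apply: kspan_sub => // b [].
have [_ top0 topD topZ _] := socle_term_right_ideal AL sttop.
split.
  split=> // x; split.
    by move=> /topE /(Sspan _ sttop); apply: kspan_mono => b [].
  by move=> /(kspan_sub top0 topD topZ (fun b Bb => (topE b).2 (Bin b Bb))) /topE.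
move=> S stS; exists (fun b => B b /\ S b); split; first by move=> b [].
split; [by move=> b [] | by apply: kindependent_sub Bind => b [] |].
by move=> x; split; [apply: Sspan | apply: span_in].
Qed.

End Spans.

(** * The algebra R(kappa, K, R) *)

Section RkBasics.
Variables (K : fieldType) (I : Type) (R : I -> algType K).
Local Notation P := (forall i, R i).
Local Notation RK := (Rk R).

Lemma Rk_ext (x y : P) : (forall i, x i = y i) -> x = y.
Proof. exact: functional_extensionality_dep. Qed.

Definition emb (i : I) (y : R i) : P := fun j =>
  match excluded_middle_informative (i = j) with
  | left e => eq_rect i R y j e
  | right _ => 0
  end.
Arguments emb {i} y _ : simpl never.

Lemma emb_self i (y : R i) : emb y i = y.
Proof.
rewrite /emb; case: excluded_middle_informative => [e|]; last by case.
by rewrite (proof_irrelevance _ e erefl).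
Qed.

Lemma emb_ne i j (y : R i) : i <> j -> emb y j = 0.
Proof. by rewrite /emb; case: excluded_middle_informative. Qed.

Lemma emb_inj i : injective (@emb i).
Proof. by move=> y y' e; rewrite -(emb_self y) e emb_self. Qed.

Lemma emb0 i : emb (0 : R i) = kzero RK.
Proof.
apply: Rk_ext => j; case: (classic (i = j)) => [<- | ij]; last exact: emb_ne.
by rewrite emb_self.
Qed.

Lemma embD i (y y' : R i) : emb (y + y') = kadd RK (emb y) (emb y').
Proof.
apply: Rk_ext => j /=; case: (classic (i = j)) => [<- | ij]; first by rewrite !emb_self.
by rewrite !emb_ne // addr0.
Qed.

Lemma embZ i k (y : R i) : emb (k *: y) = kscale RK k (emb y).
Proof.
apply: Rk_ext => j /=; case: (classic (i = j)) => [<- | ij]; first by rewrite !emb_self.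
by rewrite !emb_ne // scaler0.
Qed.

Lemma Rk_mul_emb (x : P) i (y : R i) : kmul RK x (emb y) = emb (x i * y).
Proof.
apply: Rk_ext => j /=; case: (classic (i = j)) => [<- | ij]; first by rewrite !emb_self.
by rewrite !emb_ne // mulr0.
Qed.

Lemma Rk_emb_mul (x : P) i (y : R i) : kmul RK (emb y) x = emb (y * x i).
Proof.
apply: Rk_ext => j /=; case: (classic (i = j)) => [<- | ij]; first by rewrite !emb_self.
by rewrite !emb_ne // mul0r.
Qed.

Lemma Rk_mul_emb1 (x : P) i : kmul RK x (emb (1 : R i)) = emb (x i).
Proof. by rewrite Rk_mul_emb mulr1. Qed.

Lemma Rk_mul_emb_ne i j (y : R i) (y' : R j) : i <> j ->
  kmul RK (emb y) (emb y') = kzero RK.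
Proof. by move=> ij; rewrite Rk_mul_emb emb_ne // mul0r emb0. Qed.

Lemma Rk_emb_mul_emb i (y y' : R i) : kmul RK (emb y) (emb y') = emb (y * y').
Proof. by rewrite Rk_mul_emb emb_self. Qed.

Lemma Rk_add0r (x : P) : kadd RK (kzero RK) x = x.
Proof. by apply: Rk_ext => i /=; rewrite add0r. Qed.

Lemma Rk_addr0 (x : P) : kadd RK x (kzero RK) = x.
Proof. by apply: Rk_ext => i /=; rewrite addr0. Qed.

Lemma Rk_in0 : kin RK (kzero RK).
Proof. by exists 0, [::] => i _ /=; rewrite scale0r. Qed.

Lemma Rk_in1 : kin RK (fun i => 1).
Proof. by exists 1, [::] => i _; rewrite scale1r. Qed.

Lemma Rk_inD x y : kin RK x -> kin RK y -> kin RK (kadd RK x y).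
Proof.
move=> [k [s xk]] [k' [s' yk']]; exists (k + k'), (s ++ s') => i ni /=.
by rewrite xk ?yk' ?scalerDl //; [apply: notin_cat_r ni | apply: notin_cat_l ni].
Qed.

Lemma Rk_inZ k x : kin RK x -> kin RK (kscale RK k x).
Proof. by move=> [k' [s xk']]; exists (k * k'), s => i ni /=; rewrite xk' // scalerA. Qed.

Lemma Rk_inM x y : kin RK x -> kin RK y -> kin RK (kmul RK x y).
Proof.
move=> [k [s xk]] [k' [s' yk']]; exists (k * k'), (s ++ s') => i ni /=.
rewrite xk ?yk'; first by rewrite -scalerAl mul1r scalerA.
  exact: notin_cat_r ni.
exact: notin_cat_l ni.
Qed.

Lemma Rk_in_emb i (y : R i) : kin RK (emb y).
Proof. by exists 0, [:: i] => j nj; rewrite scale0r emb_ne // => ij; apply: nj; left. Qed.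

Lemma Rk_laws : kalg_laws RK.
Proof.
split.
- exact: Rk_in0.
- exact: Rk_inD.
- exact: Rk_addr0.
- by move=> x y z; apply: Rk_ext => i /=; rewrite addrA.
- by move=> x y; apply: Rk_ext => i /=; rewrite addrC.
- by move=> x y r; apply: Rk_ext => i /=; rewrite mulrDl.
- by move=> r; apply: Rk_ext => i /=; rewrite mul0r.
- by move=> k x y; apply: Rk_ext => i /=; rewrite scalerDr.
- by move=> k; apply: Rk_ext => i /=; rewrite scaler0.
- by move=> k k' x; apply: Rk_ext => i /=; rewrite scalerA.
- by move=> x; apply: Rk_ext => i /=; rewrite scale1r.
Qed.

Lemma emb_index_eq i j (b : R i) (b' : R j) : b != 0 -> emb b = emb b' -> i = j.
Proof.
move=> b0 e; apply: NNPP => ij; move/eqP: b0; apply.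
by have := congr1 (fun x : P => x i) e; rewrite /= emb_self emb_ne // => ji; apply: ij.
Qed.

Definition dsum (x : P) : Prop := exists s : seq I, forall i, ~ List.In i s -> x i = 0.

Lemma dsum_ind (X : P -> Prop) : X (kzero RK) ->
  (forall a b, X a -> X b -> X (kadd RK a b)) ->
  forall x, dsum x -> (forall i, X (emb (x i))) -> X x.
Proof.
move=> X0 XD x [s]; elim: s x => [|a s IH] x xs Xx.
  by have -> : x = kzero RK by apply: Rk_ext => i; apply: xs.
pose x' : P := fun j => if asbool (a = j) then 0 else x j.
have -> : x = kadd RK (emb (x a)) x'.
  apply: Rk_ext => j /=; rewrite /x'; case: asboolP => [aj | aj].
    by subst j; rewrite emb_self addr0.
  by rewrite emb_ne // add0r.
apply: XD => //; apply: IH.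
- move=> i ni; rewrite /x' /=; case: asboolP => // ai.
  by apply: xs => -[].
- move=> i; rewrite /x' /=; case: asboolP => // _.
  by rewrite emb0.
Qed.

Definition one_off (F : seq I) : P :=
  fun j => if asbool (List.In j F) then 0 else 1.

Lemma one_off_in F j : List.In j F -> one_off F j = 0.
Proof. by rewrite /one_off; case: asboolP. Qed.

Lemma one_off_out F j : ~ List.In j F -> one_off F j = 1.
Proof. by rewrite /one_off; case: asboolP. Qed.

Lemma Rk_in_one_off F : kin RK (one_off F).
Proof. by exists 1, F => j nj; rewrite one_off_out // scale1r. Qed.

Lemma one_off_not_dsum F : infinite_type I -> ~ dsum (one_off F).
Proof.
move=> infI [s s0]; have [i ni] := infinite_type_fresh infI (s ++ F).
move: (s0 i (notin_cat_l ni)); rewrite one_off_out; last exact: notin_cat_r ni.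
by move/eqP; rewrite oner_eq0.
Qed.

Lemma one_off_idem F : kmul RK (one_off F) (one_off F) = one_off F.
Proof.
apply: Rk_ext => j /=; case: (classic (List.In j F)) => jF.
  by rewrite one_off_in // mulr0.
by rewrite one_off_out // mulr1.
Qed.

Lemma Rk_emb_mul_one_off F i (y : R i) :
  kmul RK (emb y) (one_off F) = if asbool (List.In i F) then kzero RK else emb y.
Proof.
case: asboolP => iF; rewrite Rk_emb_mul.
  by rewrite one_off_in // mulr0 emb0.
by rewrite one_off_out // mulr1.
Qed.

Lemma Rk_one_off_mul_emb F i (y : R i) :
  kmul RK (one_off F) (emb y) = if asbool (List.In i F) then kzero RK else emb y.
Proof.
case: asboolP => iF; rewrite Rk_mul_emb.
  by rewrite one_off_in // mul0r emb0.
by rewrite one_off_out // mul1r.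
Qed.

(* x = (x - k one_off F) + k one_off F, where x_i = k%:A for almost all i;
   the first summand is finitely supported. *)
Lemma Rk_elim (X : P -> Prop) (T : forall i, R i -> Prop) (F : seq I) :
  X (kzero RK) -> (forall a b, X a -> X b -> X (kadd RK a b)) ->
  (forall k a, X a -> X (kscale RK k a)) ->
  (forall i, right_ideal (A := alg_kalg (R i)) (T i)) ->
  (forall i, ~ List.In i F -> T i 1) ->
  (forall i y, T i y -> X (emb y)) -> X (one_off F) ->
  forall x, kin RK x -> (forall i, T i (x i)) -> X x.
Proof.
move=> X0 XD XZ Tideal TF XT Xone x [k [s xk]] Tx.
pose x' : P := fun j => x j - k *: one_off F j.
have -> : x = kadd RK x' (kscale RK k (one_off F)) by apply: Rk_ext => j /=; rewrite subrK.
apply: (XD); last exact: XZ.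
apply: (dsum_ind X0 XD); first exists (s ++ F).
  move=> j nj; rewrite /x' xk; last exact: notin_cat_l nj.
  by rewrite one_off_out ?subrr //; apply: notin_cat_r nj.
move=> j; apply: XT; apply: right_idealB => //; case: (Tideal j) => _ T0 _ TZ _; apply: TZ.
case: (classic (List.In j F)) => jF; first by rewrite one_off_in.
by rewrite one_off_out //; apply: TF.
Qed.

End RkBasics.

(** * The socle sequence of R(kappa, K, R) *)

Definition slice (K : fieldType) (I : Type) (R : I -> algType K)
  (S : (forall i, R i) -> Prop) (i : I) : R i -> Prop := fun y => S (emb y).
Arguments slice {K I R} S i _.

Section RkSlices.
Variables (K : fieldType) (I : Type) (R : I -> algType K).
Local Notation P := (forall i, R i).
Local Notation RK := (Rk R).
Local Notation kset := (P -> Prop).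
Local Notation AR i := (alg_kalg (R i)).

Definition leaves_dsum (S : kset) : Prop := exists x, S x /\ ~ dsum x.

Definition cofin_unital (S : kset) : Prop :=
  exists s : seq I, forall i, ~ List.In i s -> slice S i 1.

Lemma slice_right_ideal (S : kset) i : right_ideal (A := RK) S ->
  right_ideal (A := AR i) (slice S i).
Proof.
case=> _ S0 SD SZ SM; split=> //.
- by rewrite /slice emb0.
- by move=> x y Sx Sy; rewrite /slice embD; apply: SD.
- by move=> k x Sx; rewrite /slice embZ; apply: SZ.
- by move=> x r Sx _; have := SM _ (emb r) Sx (Rk_in_emb r); rewrite Rk_mul_emb emb_self.
Qed.

Lemma slice_coord (S : kset) i x : right_ideal (A := RK) S -> S x -> slice S i (x i).
Proof.
by case=> _ _ _ _ SM Sx; rewrite /slice -Rk_mul_emb1; apply: SM => //; apply: Rk_in_emb.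
Qed.

Definition add_emb (S : kset) i (L : R i -> Prop) : kset :=
  fun w => exists s y, [/\ S s, L y & w = kadd RK s (emb y)].

Lemma add_emb_right_ideal (S : kset) i (L : R i -> Prop) :
  right_ideal (A := RK) S -> right_ideal (A := AR i) L -> right_ideal (A := RK) (add_emb S L).
Proof.
case=> Sin S0 SD SZ SM [_ L0 LD LZ LM]; split.
- by move=> _ [s [y [Ss _ ->]]]; apply: Rk_inD; [apply: Sin | apply: Rk_in_emb].
- by exists (kzero RK), 0; split=> //; rewrite emb0 Rk_addr0.
- move=> _ _ [s [y [Ss Ly ->]]] [s' [y' [Ss' Ly' ->]]].
  exists (kadd RK s s'), (y + y'); split; [exact: SD | exact: LD |].
  by rewrite embD; apply: Rk_ext => j /=; rewrite addrACA.
- move=> k _ [s [y [Ss Ly ->]]]; exists (kscale RK k s), (k *: y); split; [exact: SZ | exact: LZ |].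
  by rewrite embZ; apply: Rk_ext => j /=; rewrite scalerDr.
- move=> _ r [s [y [Ss Ly ->]]] rin; exists (kmul RK s r), (y * r i).
  split; [exact: SM | exact: LM |].
  by rewrite -Rk_emb_mul; apply: Rk_ext => j /=; rewrite mulrDl.
Qed.

Lemma add_emb_sup (S : kset) i (L : R i -> Prop) : right_ideal (A := AR i) L ->
  ksubset (A := RK) S (add_emb S L).
Proof. by case=> _ L0 _ _ _ x Sx; exists x, 0; split=> //; rewrite emb0 Rk_addr0. Qed.

Lemma add_emb_slice (S : kset) i (L : R i -> Prop) y : right_ideal (A := RK) S ->
  right_ideal (A := AR i) L -> ksubset (A := AR i) (slice S i) L ->
  add_emb S L (emb y) -> L y.
Proof.
move=> Sideal [_ _ LD _ _] SL [s [y' [Ss Ly' e]]].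
have -> : y = s i + y' by rewrite -[y](emb_self y) e /= emb_self.
by apply: LD => //; apply: SL; apply: slice_coord.
Qed.

Lemma slice_minimal_over (S J : kset) i z : right_ideal (A := RK) S ->
  minimal_over (A := RK) S J -> J z -> ~ slice S i (z i) ->
  minimal_over (A := AR i) (slice S i) (slice J i).
Proof.
move=> Sideal [Jideal SJ _ Jmin] Jz nSz.
have [_ _ JD _ JM] := Jideal.
split; [exact: slice_right_ideal | by move=> y Sy; apply: SJ |  |].
  by exists (z i); split=> //; apply: slice_coord.
move=> L Lideal SL LJ; case: (Jmin (add_emb S L)).
- exact: add_emb_right_ideal.
- exact: add_emb_sup.
- by move=> _ [s [y [Ss Ly ->]]]; apply: JD; [apply: SJ | apply: LJ].
- move=> LS; left=> y Ly; apply: LS; exists (kzero RK), y.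
  by split=> //; [case: Sideal | rewrite Rk_add0r].
- by move=> JL; right=> y /JL; apply: add_emb_slice.
Qed.

Lemma add_emb_minimal_over (S : kset) i (L : R i -> Prop) : right_ideal (A := RK) S ->
  minimal_over (A := AR i) (slice S i) L -> minimal_over (A := RK) S (add_emb S L).
Proof.
move=> Sideal [Lideal SL [y0 [Ly0 nSy0]] Lmin].
have [_ _ SD _ _] := Sideal; have [_ _ LD _ _] := Lideal.
split; [exact: add_emb_right_ideal | exact: add_emb_sup | |].
  exists (emb y0); split=> //; exists (kzero RK), y0.
  by split=> //; [case: Sideal | rewrite Rk_add0r].
move=> J' J'ideal SJ' J'L; have [_ _ J'D _ J'M] := J'ideal.
case: (Lmin (slice J' i)).
- exact: slice_right_ideal.
- by move=> y Sy; apply: SJ'.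
- by move=> y /J'L; apply: add_emb_slice.
- move=> J'S; left=> w J'w; have [s [y [Ss Ly ew]]] := J'L _ J'w.
  have Ssy : slice S i (s i + y).
    by apply: J'S; have := slice_coord i J'ideal J'w; rewrite ew /= emb_self.
  have Sy : slice S i y.
    have -> : y = (s i + y) - s i by rewrite addrC addKr.
    by apply: right_idealB (slice_right_ideal i Sideal) _ _ Ssy (slice_coord i Sideal Ss).
  by rewrite ew; apply: SD.
- by move=> LJ'; right=> _ [s [y [Ss Ly ->]]]; apply: J'D; [apply: SJ' | apply: LJ'].
Qed.

Definition add_rprincipal (S : kset) (w : P) : kset :=
  fun v => exists s r, [/\ S s, kin RK r & v = kadd RK s (kmul RK w r)].

Lemma add_rprincipal_right_ideal (S : kset) w : right_ideal (A := RK) S -> kin RK w ->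
  right_ideal (A := RK) (add_rprincipal S w).
Proof.
case=> Sin S0 SD SZ SM win; split.
- by move=> _ [s [r [Ss rin ->]]]; apply: Rk_inD; [apply: Sin | apply: Rk_inM].
- exists (kzero RK), (kzero RK); split=> //; first exact: Rk_in0.
  by apply: Rk_ext => j /=; rewrite mulr0 addr0.
- move=> _ _ [s [r [Ss rin ->]]] [s' [r' [Ss' rin' ->]]].
  exists (kadd RK s s'), (kadd RK r r'); split; [exact: SD | exact: Rk_inD |].
  by apply: Rk_ext => j /=; rewrite mulrDr addrACA.
- move=> a _ [s [r [Ss rin ->]]]; exists (kscale RK a s), (kscale RK a r).
  split; [exact: SZ | exact: Rk_inZ |].
  by apply: Rk_ext => j /=; rewrite scalerDr scalerAr.
- move=> _ r' [s [r [Ss rin ->]]] rin'; exists (kmul RK s r'), (kmul RK r r').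
  split; [exact: SM | exact: Rk_inM |].
  by apply: Rk_ext => j /=; rewrite mulrDl mulrA.
Qed.

(* Otherwise pick j1, j2 with z_j = k%:A (k != 0) whose slices miss 1: the
   right ideal S + emb_j1(k%:A) R lies strictly between S and J. *)
Lemma cofin_unital_of_minimal_over (S J : kset) z : right_ideal (A := RK) S ->
  minimal_over (A := RK) S J -> J z -> ~ dsum z -> cofin_unital S.
Proof.
move=> Sideal [Jideal SJ _ Jmin] Jz nz; apply: NNPP => ncofin.
have nonunital s : exists i, ~ List.In i s /\ ~ slice S i 1.
  apply: NNPP => nex; apply: ncofin; exists s => i ni; apply: NNPP => nSi.
  by apply: nex; exists i.
have [Jin _ JD _ JM] := Jideal; have [_ S0 _ _ _] := Sideal.
have [k [s zk]] := Jin _ Jz.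
have k0 : k != 0.
  by apply/negP => /eqP k0; apply: nz; exists s => i ni; rewrite zk // k0 scale0r.
have Jemb j : ~ List.In j s -> J (emb (k%:A : R j)).
  by move=> js; rewrite -(zk j js) -Rk_mul_emb1; apply: JM => //; apply: Rk_in_emb.
have unital j : slice S j k%:A -> slice S j 1.
  exact: right_ideal_unit_scale (slice_right_ideal j Sideal) k0.
have [j1 [j1s nS1]] := nonunital s.
have [j2 [j2s nS2]] := nonunital (j1 :: s).
case: (Jmin (add_rprincipal S (emb (k%:A : R j1)))).
- by apply: add_rprincipal_right_ideal => //; apply: Rk_in_emb.
- move=> x Sx; exists x, (kzero RK); split=> //; first exact: Rk_in0.
  by apply: Rk_ext => j /=; rewrite mulr0 addr0.
- by move=> _ [s' [r [Ss' rin ->]]]; apply: JD; [apply: SJ | apply: JM => //; apply: Jemb].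
- move=> LS; apply: nS1; apply: unital; apply: LS.
  exists (kzero RK), (fun _ => 1); split=> //; first exact: Rk_in1.
  by apply: Rk_ext => j /=; rewrite mulr1 add0r.
- move=> JL; apply: nS2; apply: unital.
  have [s' [r [Ss' _ e]]] := JL _ (Jemb j2 (fun h => j2s (or_intror h))).
  have -> : k%:A = s' j2.
    have j12 : j1 <> j2 by move=> e12; apply: j2s; left.
    by rewrite -[LHS](emb_self (k%:A : R j2)) e /= emb_ne // mul0r addr0.
  exact: slice_coord.
Qed.

End RkSlices.

Section RkSocle.
Variables (K : fieldType) (I : Type) (R : I -> algType K).
Hypothesis infI : infinite_type I.
Local Notation P := (forall i, R i).
Local Notation RK := (Rk R).
Local Notation kset := (P -> Prop).
Local Notation AR i := (alg_kalg (R i)).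

Lemma Rk_socle_term_right_ideal (S : kset) : socle_term (A := RK) S -> right_ideal (A := RK) S.
Proof. by move=> stS; apply: (socle_term_right_ideal (Rk_laws R) stS). Qed.

Record coordinatewise (S : kset) : Prop := Coordinatewise {
  slice_socle_term : forall i, socle_term (A := AR i) (slice S i);
  cofin_unital_of_leaves : leaves_dsum S -> cofin_unital S;
  coordinatewiseE : forall x,
    S x <-> [/\ kin RK x, forall i, slice S i (x i) & dsum x \/ leaves_dsum S] }.

Lemma one_off_mul_sub_scale (S : kset) F r : coordinatewise S ->
  (forall i, ~ List.In i F -> slice S i 1) -> kin RK r ->
  exists b : K, S (fun j => one_off R F j * (r j - b%:A)).
Proof.
move=> [Sterm _ SE] SF [b [sr rb]]; exists b; apply/SE; split.
- have -> : (fun j => one_off R F j * (r j - b%:A)) =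
      kmul RK (one_off R F) (kadd RK r (kscale RK (- b) (fun _ => 1))).
    by apply: Rk_ext => j /=; rewrite scaleNr.
  apply: Rk_inM; first exact: Rk_in_one_off.
  by apply: Rk_inD; [exists b, sr | apply: Rk_inZ; apply: Rk_in1].
- move=> j; have [_ S0 _ _ _] := alg_socle_term_right_ideal (Sterm j).
  case: (classic (List.In j F)) => jF; first by rewrite one_off_in // mul0r.
  exact: right_ideal_full (alg_socle_term_right_ideal (Sterm j)) (SF j jF) _.
- by left; exists sr => j nj; rewrite rb // subrr mulr0.
Qed.

Definition add_line (S : kset) (v : P) : kset :=
  fun w => exists s (a : K), S s /\ w = kadd RK s (kscale RK a v).

Lemma add_one_off_right_ideal (S : kset) F : coordinatewise S -> right_ideal (A := RK) S ->
  (forall i, ~ List.In i F -> slice S i 1) -> right_ideal (A := RK) (add_line S (one_off R F)).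
Proof.
move=> Scw [Sin S0 SD SZ SM] SF; split.
- by move=> _ [s [a [Ss ->]]]; apply: Rk_inD; [apply: Sin | apply: Rk_inZ; apply: Rk_in_one_off].
- by exists (kzero RK), 0; split=> //; apply: Rk_ext => j /=; rewrite scale0r addr0.
- move=> _ _ [s [a [Ss ->]]] [s' [a' [Ss' ->]]]; exists (kadd RK s s'), (a + a').
  by split; [apply: SD | apply: Rk_ext => j /=; rewrite scalerDl addrACA].
- move=> b _ [s [a [Ss ->]]]; exists (kscale RK b s), (b * a).
  by split; [apply: SZ | apply: Rk_ext => j /=; rewrite scalerDr scalerA].
- move=> _ r [s [a [Ss ->]]] rin; have [b Sd] := one_off_mul_sub_scale Scw SF rin.
  exists (kadd RK (kmul RK s r) (kscale RK a (fun j => one_off R F j * (r j - b%:A)))), (a * b).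
  split; first by apply: SD; [apply: SM | apply: SZ].
  apply: Rk_ext => j /=; rewrite mulrDl -addrA; congr (_ + _).
  by rewrite -scalerAl -scalerA -scalerDr mulrBr -scalerAr mulr1 subrK.
Qed.

Lemma minimal_over_add_one_off (S : kset) F : coordinatewise S -> right_ideal (A := RK) S ->
  ~ leaves_dsum S -> (forall i, ~ List.In i F -> slice S i 1) ->
  minimal_over (A := RK) S (add_line S (one_off R F)).
Proof.
move=> Scw Sideal nleaves SF.
have S_one_off : ~ S (one_off R F).
  by move=> /(coordinatewiseE Scw) [_ _ [/one_off_not_dsum | ]]; [apply | ].
have [_ S0 _ _ _] := Sideal.
split; [exact: add_one_off_right_ideal | | |].
- by move=> x Sx; exists x, 0; split=> //; apply: Rk_ext => j /=; rewrite scale0r addr0.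
- exists (one_off R F); split=> //; exists (kzero RK), 1.
  by split=> //; apply: Rk_ext => j /=; rewrite scale1r add0r.
move=> J [_ _ JD JZ _] SJ JL.
case: (classic (ksubset (A := RK) J S)) => [JS | /not_ksubset [w [Jw nSw]]]; first by left.
right; have [s [a [Ss ew]]] := JL _ Jw.
have a0 : a != 0.
  apply/negP => /eqP a0; apply: nSw; rewrite ew a0.
  suff -> : kadd RK s (kscale RK 0 (one_off R F)) = s by [].
  by apply: Rk_ext => j /=; rewrite scale0r addr0.
have J_one_off : J (one_off R F).
  have -> : one_off R F = kscale RK a^-1 (kadd RK w (kscale RK (-1) s)).
    by apply: Rk_ext => j; rewrite ew /= scaleN1r addrC addKr scalerA mulVf // scale1r.
  by apply: (JZ); apply: (JD) => //; apply: (JZ); apply: SJ.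
by move=> _ [s' [a' [Ss' ->]]]; apply: JD; [apply: SJ | apply: JZ].
Qed.

Lemma coordinatewise_one_off (S : kset) F : coordinatewise S -> leaves_dsum S ->
  (forall i, ~ List.In i F -> slice S i 1) -> S (one_off R F).
Proof.
move=> Scw Sleaves SF; apply/(coordinatewiseE Scw); split=> //; last by right.
- exact: Rk_in_one_off.
- move=> j; case: (classic (List.In j F)) => jF; last by rewrite one_off_out //; apply: SF.
  rewrite one_off_in //.
  exact: (socle_term_has0 (kaddr0 (alg_kalg_laws _)) (slice_socle_term Scw j)).
Qed.

Lemma socle_next_emb (S : kset) i y : socle_term (A := RK) S ->
  socle_next (A := AR i) (slice S i) y -> socle_next (A := RK) S (emb y).
Proof.
move=> stS; have Sideal := Rk_socle_term_right_ideal stS; have [_ S0 _ _ _] := Sideal.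
have [_ N0 ND _ _] := Rk_socle_term_right_ideal (socle_termS stS).
move: y; apply: (socle_next_ind (A := AR i) (X := fun y => socle_next (A := RK) S (emb y))).
- by rewrite emb0.
- by move=> a b Na Nb; rewrite embD; apply: ND.
- by move=> a Sa; apply: (socle_next_sup (kaddr0 (Rk_laws R)) Sa).
- move=> J Jmin a Ja.
  apply: (minimal_over_sub_socle_next (Rk_laws R) S0 (add_emb_minimal_over Sideal Jmin)).
  by exists (kzero RK), a; split=> //; rewrite Rk_add0r.
Qed.

Lemma socle_next_one_off (S : kset) F : socle_term (A := RK) S -> coordinatewise S ->
  (forall i, ~ List.In i F -> slice S i 1) -> socle_next (A := RK) S (one_off R F).
Proof.
move=> stS Scw SF; have Sideal := Rk_socle_term_right_ideal stS; have [_ S0 _ _ _] := Sideal.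
case: (classic (leaves_dsum S)) => Sleaves.
  by apply: (socle_next_sup (kaddr0 (Rk_laws R))); apply: coordinatewise_one_off.
have Lmin := minimal_over_add_one_off Scw Sideal Sleaves SF.
apply: (minimal_over_sub_socle_next (Rk_laws R) S0 Lmin).
by exists (kzero RK), 1; split=> //; apply: Rk_ext => j /=; rewrite scale1r add0r.
Qed.

Definition next_desc (S : kset) (x : P) : Prop :=
  [/\ kin RK x, forall i, socle_next (A := AR i) (slice S i) (x i) & dsum x \/ cofin_unital S].

Lemma socle_next_sub_desc (S : kset) : socle_term (A := RK) S -> coordinatewise S ->
  ksubset (A := RK) (socle_next (A := RK) S) (next_desc S).
Proof.
move=> stS Scw; have Sideal := Rk_socle_term_right_ideal stS.
have Nideal i : right_ideal (A := AR i) (socle_next (A := AR i) (slice S i)).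
  exact: (socle_term_right_ideal (alg_kalg_laws (R i)) (socle_termS (slice_socle_term Scw i))).
have Nsup i : ksubset (A := AR i) (slice S i) (socle_next (A := AR i) (slice S i)).
  exact: (socle_next_sup (kaddr0 (alg_kalg_laws _)) (S := _)).
apply: socle_next_ind.
- by split; [exact: Rk_in0 | move=> i; case: (Nideal i) | left; exists [::]].
- move=> x y [xin xN xd] [yin yN yd]; split; first exact: Rk_inD.
    by move=> i; case: (Nideal i) => _ _ + _ _; apply.
  case: xd => [[s xs] | ]; last by right.
  case: yd => [[s' ys] | ]; last by right.
  left; exists (s ++ s') => i ni /=.
  by rewrite xs ?ys ?addr0 //; [apply: notin_cat_r ni | apply: notin_cat_l ni].
- move=> x /(coordinatewiseE Scw) [xin xS xd]; split=> //; first by move=> i; apply: Nsup.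
  by case: xd => [| /(cofin_unital_of_leaves Scw)]; [left | right].
- move=> J Jmin z Jz; have [[Jin _ _ _ _] _ _ _] := Jmin; split; first exact: Jin.
    move=> i; case: (classic (slice S i (z i))) => [| nSz]; first exact: Nsup.
    have [_ Si0 _ _ _] := slice_right_ideal i Sideal.
    have Jimin := slice_minimal_over Sideal Jmin Jz nSz.
    apply: (minimal_over_sub_socle_next (alg_kalg_laws (R i)) Si0 Jimin).
    by apply: slice_coord; case: Jmin.
  case: (classic (dsum z)) => [| nz]; first by left.
  by right; apply: cofin_unital_of_minimal_over Sideal Jmin Jz nz.
Qed.

Lemma desc_sub_socle_next (S : kset) : socle_term (A := RK) S -> coordinatewise S ->
  ksubset (A := RK) (next_desc S) (socle_next (A := RK) S).
Proof.
move=> stS Scw x [xin xN [xd | [F SF]]].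
all: have [_ N0 ND NZ _] := Rk_socle_term_right_ideal (socle_termS stS).
  by apply: (dsum_ind N0 ND xd) => i; apply: socle_next_emb.
apply: (Rk_elim (T := fun i => socle_next (A := AR i) (slice S i)) N0 ND NZ _ _ _ _ xin xN).
- move=> i.
  exact: (socle_term_right_ideal (alg_kalg_laws (R i)) (socle_termS (slice_socle_term Scw i))).
- by move=> i ni; apply: (socle_next_sup (kaddr0 (alg_kalg_laws _)) (SF i ni)).
- by move=> i y; apply: socle_next_emb.
- exact: socle_next_one_off stS Scw SF.
Qed.

Lemma slice_socle_next (S : kset) i : socle_term (A := RK) S -> coordinatewise S ->
  slice (socle_next (A := RK) S) i = socle_next (A := AR i) (slice S i).
Proof.
move=> stS Scw; apply: pred_ext => y; last exact: socle_next_emb.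
by move=> /(socle_next_sub_desc stS Scw) [_ /(_ i)]; rewrite emb_self.
Qed.

Lemma leaves_dsum_socle_next (S : kset) : socle_term (A := RK) S -> coordinatewise S ->
  leaves_dsum (socle_next (A := RK) S) <-> cofin_unital S.
Proof.
move=> stS Scw; split.
  by move=> [x [/(socle_next_sub_desc stS Scw) [_ _ [] // ] nx]].
move=> [F SF]; exists (one_off R F); split; first exact: socle_next_one_off.
exact: one_off_not_dsum.
Qed.

Lemma coordinatewise_socle_next (S : kset) : socle_term (A := RK) S -> coordinatewise S ->
  coordinatewise (socle_next (A := RK) S).
Proof.
move=> stS Scw; have sliceN i := slice_socle_next i stS Scw.
have leavesN := leaves_dsum_socle_next stS Scw.
split.
- by move=> i; rewrite sliceN; apply: socle_termS; apply: slice_socle_term.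
- move=> /leavesN [F SF]; exists F => i ni; rewrite sliceN.
  by apply: (socle_next_sup (kaddr0 (alg_kalg_laws _)) (SF i ni)).
- move=> x; split.
    move=> /(socle_next_sub_desc stS Scw) [xin xN xd]; split=> //.
      by move=> i; rewrite sliceN.
    by case: xd => [| /leavesN]; [left | right].
  move=> [xin xN xd]; apply: (desc_sub_socle_next stS Scw); split=> //.
    by move=> i; rewrite -sliceN.
  by case: xd => [| /leavesN]; [left | right].
Qed.


Lemma slice_zero i : slice (fun x : P => x = kzero RK) i = (fun y : R i => y = 0).
Proof.
apply: pred_ext => y; last by move=> ->; rewrite /slice emb0.
by rewrite /slice => y0; apply: (@emb_inj _ _ R i); rewrite emb0.
Qed.

Lemma coordinatewise_zero : coordinatewise (fun x : P => x = kzero RK).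
Proof.
split.
- by move=> i; rewrite slice_zero; apply: socle_term0.
- by move=> [x [-> nx]]; case: nx; exists [::].
- move=> x; split.
    by move=> ->; split; [exact: Rk_in0 | move=> i; rewrite slice_zero | left; exists [::]].
  by move=> [_ x0 _]; apply: Rk_ext => i; move: (x0 i); rewrite slice_zero.
Qed.

Lemma socle_family_bound (J : Type) (f : J -> kset) (x : P) (L : seq I) j0 :
  (forall j, socle_term (A := RK) (f j)) -> (forall i, exists j, slice (f j) i (x i)) ->
  exists j, ksubset (A := RK) (f j0) (f j) /\ forall i, List.In i L -> slice (f j) i (x i).
Proof.
move=> stf xf; elim: L => [|a L [j1 [f01 f1x]]]; first by exists j0; split=> // i [].
have [j2 f2x] := xf a.
case: (socle_term_total (kaddr0 (Rk_laws R)) (stf j1) (stf j2)) => f12.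
  exists j2; split; first by move=> z /f01 /f12.
  by move=> i [<- // | iL]; apply: f12; apply: f1x.
exists j1; split=> //.
by move=> i [<- | iL]; [apply: f12 | apply: f1x].
Qed.

Lemma coordinatewise_union (J : Type) (f : J -> kset) : inhabited J ->
  (forall j, socle_term (A := RK) (f j)) -> (forall j, coordinatewise (f j)) ->
  coordinatewise (fun x => exists j, f j x).
Proof.
move=> [j0] stf fcw; split.
- move=> i; change (socle_term (A := AR i) (fun y => exists j, slice (f j) i y)).
  apply: socle_termU; first by constructor.
  by move=> j; apply: slice_socle_term.
- move=> [x [[j fx] nx]]; have [F fF] := cofin_unital_of_leaves (fcw j) (ex_intro _ x (conj fx nx)).
  by exists F => i ni; exists j; apply: fF.
move=> x; split.
  move=> [j /(coordinatewiseE (fcw j)) [xin xf xd]]; split=> //.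
    by move=> i; exists j; apply: xf.
  by case: xd => [| [y [fy ny]]]; [left | right; exists y; split=> //; exists j].
move=> [xin xf xd].
case: xd => [[s xs] | [y [[j1 fy] ny]]].
  have [j [_ fjx]] := socle_family_bound s j0 stf xf; exists j; apply/(coordinatewiseE (fcw j)).
  split=> //; last by left; exists s.
  move=> i; case: (classic (List.In i s)) => [/fjx // | ni].
  rewrite xs //.
  exact: (socle_term_has0 (kaddr0 (alg_kalg_laws _)) (slice_socle_term (fcw j) i)).
have [F f1F] := cofin_unital_of_leaves (fcw j1) (ex_intro _ y (conj fy ny)).
have [k [s xk]] := xin.
have [j [f1j fjx]] := socle_family_bound (s ++ F) j1 stf xf.
exists j; apply/(coordinatewiseE (fcw j)); split=> //; last first.
  by right; exists y; split=> //; apply: f1j.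
move=> i; case: (classic (List.In i (s ++ F))) => [/fjx // | ni].
rewrite xk; last exact: notin_cat_l ni.
apply: right_ideal_full (alg_socle_term_right_ideal (slice_socle_term (fcw j) i)) _ _.
by apply: f1j; apply: f1F; apply: notin_cat_r ni.
Qed.

Lemma socle_term_coordinatewise (S : kset) : socle_term (A := RK) S -> coordinatewise S.
Proof.
elim=> {S} [| S stS Scw | J f inh stf fcw].
- exact: coordinatewise_zero.
- exact: coordinatewise_socle_next.
- exact: coordinatewise_union.
Qed.

Lemma cofin_unital_bound : exists F : seq I, forall S, socle_term (A := RK) S ->
  leaves_dsum S -> forall i, ~ List.In i F -> slice S i 1.
Proof.
have last_inside S : socle_term (A := RK) S -> leaves_dsum S ->
    exists S0, [/\ socle_term (A := RK) S0, ~ leaves_dsum S0 & cofin_unital S0].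
  elim=> {S} [| S stS IH | J f _ stf IH].
  - by move=> [x [-> nx]]; case: nx; exists [::].
  - case: (classic (leaves_dsum S)) => [/IH // | nS] NSleaves; exists S; split=> //.
    exact/(leaves_dsum_socle_next stS (socle_term_coordinatewise stS)).
  - by move=> [x [[j fx] nx]]; apply: (IH j); exists x.
case: (classic (exists S, socle_term (A := RK) S /\ leaves_dsum S)) => [[S [stS Sleaves]] | none].
  have [S0 [stS0 nS0 [F S0F]]] := last_inside S stS Sleaves.
  exists F => S' stS' [x [S'x nx]] i ni.
  case: (socle_term_total (kaddr0 (Rk_laws R)) stS' stS0) => [S'S0 | S0S'].
    by case: nS0; exists x; split=> //; apply: S'S0.
  by apply: S0S'; apply: S0F.
by exists [::] => S stS Sleaves; case: none; exists S.
Qed.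

Definition socle_top : kset :=
  fun x => exists S : {S : kset | socle_term (A := RK) S}, sval S x.

Lemma socle_term_top : socle_term (A := RK) socle_top.
Proof.
apply: socle_termU; last by case.
by constructor; exists (fun x => x = kzero RK); apply: socle_term0.
Qed.

Lemma Rk_semiartinian : (forall i, semiartinian (AR i)) -> semiartinian RK.
Proof.
move=> Rsemi; exists socle_top; split; first exact: socle_term_top.
have topcw := socle_term_coordinatewise socle_term_top.
have top_fixed : ksubset (A := RK) (socle_next (A := RK) socle_top) socle_top.
  by move=> x Nx; exists (exist _ _ (socle_termS socle_term_top)).
have slice_full i y : slice socle_top i y.
  have [Si [stSi Si_full]] := Rsemi i.
  apply: (socle_term_sub_fixpoint (kaddr0 (alg_kalg_laws _)) (slice_socle_term topcw i) _ stSi).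
    by rewrite -slice_socle_next //; [move=> z /top_fixed | exact: socle_term_top].
  exact/Si_full.
have top_leaves : leaves_dsum socle_top.
  have [x [Nx nx]] : leaves_dsum (socle_next (A := RK) socle_top).
    by apply/(leaves_dsum_socle_next socle_term_top topcw); exists [::].
  by exists x; split=> //; apply: top_fixed.
move=> x; split; first by move=> /(coordinatewiseE topcw) [].
by move=> xin; apply/(coordinatewiseE topcw); split=> //; right.
Qed.

End RkSocle.

(** * Conormed bases of R(kappa, K, R) *)

Section RkIndependence.
Variables (K : fieldType) (I : Type) (R : I -> algType K).
Local Notation P := (forall i, R i).
Local Notation RK := (Rk R).
Local Notation AR i := (alg_kalg (R i)).

Definition coord_terms i (Q : P -> Prop) (l : seq (K * P)) : seq (K * R i) :=
  foldr (fun q acc => if asbool (Q q.2) then (q.1, q.2 i) :: acc else acc) [::] l.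

Lemma coord_termsP i Q l p : List.In p (coord_terms i Q l) ->
  exists q, [/\ List.In q l, Q q.2 & p = (q.1, q.2 i)].
Proof.
elim: l => [|q l IH] //=; case: asboolP => Qq; last first.
  by move/IH => [q' [lq' Qq' ->]]; exists q'; split=> //; right.
case=> [<- | /IH [q' [lq' Qq' ->]]]; first by exists q; split=> //; left.
by exists q'; split=> //; right.
Qed.

Lemma coord_terms_mem i Q l q : List.In q l -> Q q.2 -> List.In (q.1, q.2 i) (coord_terms i Q l).
Proof.
elim: l => [|q' l IH] //= lq Qq; case: asboolP => Qq'.
  by case: lq => [-> | lq]; [left | right; apply: IH].
by case: lq => [qq' | lq]; [case: Qq'; rewrite qq' | apply: IH].
Qed.

Lemma coord_terms_sum i Q l : (forall q, List.In q l -> ~ Q q.2 -> q.1 *: q.2 i = 0) ->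
  ksum (A := AR i) (map (fun p => kscale (AR i) p.1 p.2) (coord_terms i Q l)) =
  ksum (A := RK) (map (fun p => kscale RK p.1 p.2) l) i.
Proof.
elim: l => [|q l IH] nQ0 //=; rewrite -IH => [|q' lq']; last by apply: nQ0; right.
case: asboolP => Qq //; rewrite /ksum /=.
by rewrite (nQ0 q (or_introl erefl) Qq) add0r.
Qed.

Lemma coord_terms_NoDup i Q l : List.NoDup (map snd l) ->
  (forall q q', List.In q l -> List.In q' l -> Q q.2 -> Q q'.2 -> q.2 i = q'.2 i -> q.2 = q'.2) ->
  List.NoDup (map snd (coord_terms i Q l)).
Proof.
elim: l => [|q l IH] nd Qinj /=; first exact: List.NoDup_nil.
have [nq nd_l] := proj1 (List.NoDup_cons_iff _ _) nd.
have IHl := IH nd_l (fun q1 q2 l1 l2 => Qinj q1 q2 (or_intror l1) (or_intror l2)).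
case: asboolP => Qq //=; constructor=> //.
move=> /List.in_map_iff [p [pE /coord_termsP [q' [lq' Qq' pq']]]].
rewrite pq' /= in pE; case: nq; rewrite -(Qinj q' q) //; last by left.
- exact: List.in_map.
- by right.
Qed.

(* Read the vanishing combination at coordinate i. *)
Lemma Rk_coeff_eq0 i (Bi : R i -> Prop) (Q : P -> Prop) (l : seq (K * P)) :
  kindependent (A := AR i) Bi -> List.NoDup (map snd l) ->
  (forall q, List.In q l -> Q q.2 -> Bi (q.2 i)) ->
  (forall q q', List.In q l -> List.In q' l -> Q q.2 -> Q q'.2 -> q.2 i = q'.2 i -> q.2 = q'.2) ->
  (forall q, List.In q l -> ~ Q q.2 -> q.1 *: q.2 i = 0) ->
  ksum (A := RK) (map (fun p => kscale RK p.1 p.2) l) = kzero RK ->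
  forall q, List.In q l -> Q q.2 -> q.1 = 0.
Proof.
move=> Bind nd QB Qinj nQ0 sum0 q lq Qq.
apply: (Bind _ (coord_terms_NoDup nd Qinj) _ _ _ (coord_terms_mem i lq Qq)).
  by move=> p /coord_termsP [q' [lq' Qq' ->]]; apply: QB.
by rewrite coord_terms_sum // sum0.
Qed.

End RkIndependence.

Section RkBases.
Variables (K : fieldType) (I : Type) (R : I -> algType K).
Hypothesis infI : infinite_type I.
Hypothesis Rsemi : forall i, semiartinian (alg_kalg (R i)).
Local Notation P := (forall i, R i).
Local Notation RK := (Rk R).
Local Notation kset := (P -> Prop).
Local Notation AR i := (alg_kalg (R i)).

Variable F : seq I.
Hypothesis FS : forall S, socle_term (A := RK) S -> leaves_dsum S ->
  forall i, ~ List.In i F -> slice S i 1.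

Lemma socle_term_one_off (S : kset) : socle_term (A := RK) S -> leaves_dsum S -> S (one_off R F).
Proof.
move=> stS Sleaves.
exact: (coordinatewise_one_off (socle_term_coordinatewise infI stS) Sleaves (FS stS Sleaves)).
Qed.

Lemma socle_term_sub (S Y : kset) : socle_term (A := RK) S -> Y (kzero RK) ->
  (forall a b, Y a -> Y b -> Y (kadd RK a b)) -> (forall k a, Y a -> Y (kscale RK k a)) ->
  (forall i y, slice S i y -> Y (emb y)) -> (leaves_dsum S -> Y (one_off R F)) ->
  ksubset (A := RK) S Y.
Proof.
move=> stS Y0 YD YZ Yemb Yone x.
move=> /(coordinatewiseE (socle_term_coordinatewise infI stS)) [xin xS [xd | Sleaves]].
  exact: (dsum_ind Y0 YD xd (fun i => Yemb i _ (xS i))).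
apply: (Rk_elim Y0 YD YZ _ (FS stS Sleaves) Yemb (Yone Sleaves) xin xS) => i.
exact: alg_socle_term_right_ideal (slice_socle_term (socle_term_coordinatewise infI stS) i).
Qed.

Lemma kspan_emb i (X : R i -> Prop) (Y : kset) y :
  (forall b, X b -> kspan (A := RK) Y (emb b)) ->
  kspan (A := AR i) X y -> kspan (A := RK) Y (emb y).
Proof.
move=> XY; move: y; apply: (kspan_sub (A := AR i) (Y := fun y => kspan (A := RK) Y (emb y))) => //.
- by rewrite emb0; apply: kspan0.
- by move=> a b Ya Yb; rewrite embD; apply: (kspanD (Rk_laws R) Ya Yb).
- by move=> k a Ya; rewrite embZ; apply: (kspanZ (Rk_laws R) k Ya).
Qed.

Lemma slice_span (S X : kset) i (Bi : R i -> Prop) y : socle_term (A := RK) S ->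
  conormed (A := AR i) Bi -> (forall b, Bi b -> S (emb b) -> kspan (A := RK) X (emb b)) ->
  slice S i y -> kspan (A := RK) X (emb y).
Proof.
move=> stS [_ Bi_conormed] BX Sy.
have Sterm := slice_socle_term (socle_term_coordinatewise infI stS) i.
have [B' [B'B [B'S _ B'span]]] := Bi_conormed _ Sterm.
apply: (kspan_emb _ ((B'span y).1 Sy)) => b B'b.
by apply: BX; [apply: B'B | apply: B'S].
Qed.

Variable Bc : forall i, R i -> Prop.
Arguments Bc : clear implicits.
Hypothesis Bc_conormed : forall i, conormed (A := AR i) (Bc i).

Lemma Bc_independent : forall i, kindependent (A := AR i) (Bc i).
Proof. by move=> i; case: (Bc_conormed i) => [[_ + _] _]. Qed.

Definition Rk_basis : kset := fun x => (exists i b, Bc i b /\ x = emb b) \/ x = one_off R F.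

Lemma Rk_basis_in : ksubset (A := RK) Rk_basis (kin RK).
Proof. by move=> _ [[i [b [_ ->]]] | ->]; [apply: Rk_in_emb | apply: Rk_in_one_off]. Qed.

Lemma Rk_basis_independent : kindependent (A := RK) Rk_basis.
Proof.
move=> l nd lB sum0.
have [L lL] : exists L, forall x j, List.In x (map snd l) ->
    (exists b, Bc j b /\ x = emb b) -> List.In j L.
  apply: relation_image_list => x j j' [b [Bb ->]] [b' [_ bb']].
  exact: emb_index_eq (kindependent_neq0 (@Bc_independent j) Bb) bb'.
have [i ni] := infinite_type_fresh infI (F ++ L).
have one_coeff q : List.In q l -> q.2 = one_off R F -> q.1 = 0.
  apply: (Rk_coeff_eq0 (Bi := fun b => b = 1) (Q := fun x => x = one_off R F)
    (@kindependent_one K (R i))) => //.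
  - by move=> q' _ ->; rewrite one_off_out //; apply: notin_cat_l ni.
  - by move=> q1 q2 _ _ -> ->.
  - move=> q' lq' nq'; case: (lB q' lq') => [[j [b [Bb q'b]]] | //].
    rewrite q'b emb_ne ?scaler0 // => ji; apply: (notin_cat_r ni); rewrite -ji.
    by apply: (lL q'.2); [apply: List.in_map | exists b].
have emb_coeff j b q : List.In q l -> Bc j b -> q.2 = emb b -> q.1 = 0.
  move=> lq Bb qb; apply: (Rk_coeff_eq0 (i := j) (Bi := Bc j)
    (Q := fun x => exists b, Bc j b /\ x = emb b) (@Bc_independent j) nd) => //; last by exists b.
  - by move=> q' _ [b' [Bb' ->]]; rewrite emb_self.
  - by move=> q1 q2 _ _ [b1 [_ ->]] [b2 [_ ->]]; rewrite !emb_self => ->.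
  move=> q' lq' nQ; case: (lB q' lq') => [[j' [b' [Bb' q'b']]] | /(one_coeff q' lq') ->].
    case: (classic (j' = j)) => [jj | jj]; last by rewrite q'b' emb_ne // scaler0.
    by subst j'; case: nQ; exists b'.
  by rewrite scale0r.
by move=> p lp; case: (lB p lp) => [[j [b [Bb pb]]] | /(one_coeff p lp)] //; apply: emb_coeff Bb pb.
Qed.

Lemma Rk_basis_conormed : conormed (A := RK) Rk_basis.
Proof.
apply: (conormed_of_spans (Rk_laws R) (Rk_semiartinian infI Rsemi) Rk_basis_in
  Rk_basis_independent).
move=> S stS; apply: socle_term_sub => //.
- exact: kspan0.
- by move=> a b; apply: (kspanD (Rk_laws R)).
- by move=> k a; apply: (kspanZ (Rk_laws R)).
- move=> i y Sy; apply: (slice_span stS (Bc_conormed i) _ Sy) => b Bb Sb.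
  by apply: (kspan_base (Rk_laws R)); split=> //; left; exists i, b.
- move=> Sleaves; apply: (kspan_base (Rk_laws R)).
  by split; [right | apply: socle_term_one_off].
Qed.

Lemma Rk_basis_multiplicative : (forall i, Defs.multiplicative (A := AR i) (Bc i)) ->
  Defs.multiplicative (A := RK) Rk_basis.
Proof.
move=> Bc_mult x y [[i [b [Bb ->]]] | ->] [[j [b' [Bb' ->]]] | ->].
- case: (classic (i = j)) => [ij | ij]; last by left; apply: Rk_mul_emb_ne.
  subst j; rewrite Rk_emb_mul_emb; case: (Bc_mult i b b' Bb Bb') => [/= -> | bb'].
    by left; rewrite emb0.
  by right; left; exists i, (b * b').
- rewrite Rk_emb_mul_one_off; case: asboolP => _; first by left.
  by right; left; exists i, b.
- rewrite Rk_one_off_mul_emb; case: asboolP => _; first by left.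
  by right; left; exists j, b'.
- by right; right; apply: one_off_idem.
Qed.

Variables (i0 : I) (B0 : R i0 -> Prop) (e : R i0).
Hypothesis i0F : List.In i0 F.
Local Notation E := (emb e).

Definition Rk_strong_basis : kset := fun x =>
  (exists b, B0 b /\ x = emb b) \/ (exists p, (Rk_basis p /\ p i0 = 0) /\ x = kadd RK p E).

Lemma Rk_basis_off_i0 p : Rk_basis p -> p i0 = 0 ->
  (exists i c, [/\ i <> i0, Bc i c & p = emb c]) \/ p = one_off R F.
Proof.
case=> [[i [c [Bc_c ->]]] p0 | ->]; [left | by right].
exists i, c; split=> // ii0; subst i; move: p0; rewrite emb_self => c0.
by move: (kindependent_neq0 (@Bc_independent i0) Bc_c); rewrite c0 eqxx.
Qed.

Lemma Rk_strong_basis_in : ksubset (A := RK) Rk_strong_basis (kin RK).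
Proof.
move=> _ [[b [_ ->]] | [p [[Bp _] ->]]]; first exact: Rk_in_emb.
by apply: Rk_inD; [apply: Rk_basis_in | apply: Rk_in_emb].
Qed.

Lemma Rk_mul_shift p q : p i0 = 0 -> q i0 = 0 -> e * e = e ->
  kmul RK (kadd RK p E) (kadd RK q E) = kadd RK (kmul RK p q) E.
Proof.
move=> p0 q0 ee; apply: Rk_ext => j /=; case: (classic (i0 = j)) => [<- | ij].
  by rewrite p0 q0 emb_self !add0r mul0r add0r ee.
by rewrite emb_ne // !addr0.
Qed.

Lemma Rk_strong_basis_strong :
  strong_multiplicative (A := AR i0) B0 -> e * e = e -> B0 e ->
  (forall i, Defs.multiplicative (A := AR i) (Bc i)) ->
  strong_multiplicative (A := RK) Rk_strong_basis.
Proof.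
move=> B0_strong ee B0e Bc_mult.
move=> _ _ [[b [B0b ->]] | [p [[Bp p0] ->]]] [[b' [B0b' ->]] | [q [[Bq q0] ->]]].
- by left; exists (b * b'); split; [apply: B0_strong | apply: Rk_emb_mul_emb].
- by left; exists (b * e); split; [apply: B0_strong | rewrite Rk_emb_mul /= q0 add0r emb_self].
- by left; exists (e * b'); split; [apply: B0_strong | rewrite Rk_mul_emb /= p0 add0r emb_self].
rewrite Rk_mul_shift //.
case: (Rk_basis_multiplicative Bc_mult Bp Bq) => [-> | Bpq].
  by left; exists e; split=> //; rewrite Rk_add0r.
by right; exists (kmul RK p q); split=> //; split=> //=; rewrite p0 mul0r.
Qed.

Lemma Rk_strong_basisP x : Rk_strong_basis x ->
  [\/ exists b, B0 b /\ x = emb b,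
      exists j c, [/\ j <> i0, Bc j c & x = kadd RK (emb c) E] |
      x = kadd RK (one_off R F) E].
Proof.
case=> [? | [p [[Bp p0] ->]]]; first by constructor 1.
case: (Rk_basis_off_i0 Bp p0) => [[j [c [ji0 Bc_c ->]]] | ->]; last by constructor 3.
by constructor 2; exists j, c.
Qed.

Lemma Rk_addE_inj a b : kadd RK a E = kadd RK b E -> a = b.
Proof.
by move=> ab; apply: Rk_ext => j; apply: (addIr (E j)); move: (congr1 (fun x : P => x j) ab).
Qed.

Lemma E_off_i0 j : j <> i0 -> E j = 0.
Proof. by move=> ji0; apply: emb_ne => i0j; apply: ji0. Qed.

Section StrongIndependence.
Hypothesis B0_ind : kindependent (A := AR i0) B0.
Variable l : seq (K * P).
Hypothesis nd : List.NoDup (map snd l).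
Hypothesis lB : forall q, List.In q l -> Rk_strong_basis q.2.
Hypothesis sum0 : ksum (A := RK) (map (fun q => kscale RK q.1 q.2) l) = kzero RK.

Lemma strong_fresh_index : exists i, ~ List.In i F /\
  forall q j c, List.In q l -> Bc j c -> q.2 = kadd RK (emb c) E -> j <> i.
Proof.
have [L lL] : exists L, forall x j, List.In x (map snd l) ->
    (exists c, Bc j c /\ x = kadd RK (emb c) E) -> List.In j L.
  apply: relation_image_list => x j j' [c [Bc_c ->]] [c' [_ /Rk_addE_inj cc']].
  exact: emb_index_eq (kindependent_neq0 (@Bc_independent j) Bc_c) cc'.
have [i ni] := infinite_type_fresh infI (F ++ L).
exists i; split; first exact: notin_cat_l ni.
move=> q j c lq Bc_c qc ji; apply: (notin_cat_r ni); rewrite -ji.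
by apply: (lL q.2); [apply: List.in_map | exists c].
Qed.

Lemma one_off_shift_coeff_eq0 q : List.In q l -> q.2 = kadd RK (one_off R F) E -> q.1 = 0.
Proof.
have [i [iF i_fresh]] := strong_fresh_index.
have ii0 : i <> i0 by move=> ii0; apply: iF; rewrite ii0.
apply: (Rk_coeff_eq0 (Bi := fun b => b = 1) (Q := fun x => x = kadd RK (one_off R F) E)
  (@kindependent_one K (R i)) nd) => //.
- by move=> q' _ -> /=; rewrite one_off_out // E_off_i0 // addr0.
- by move=> q1 q2 _ _ -> ->.
move=> q' lq' nQ; case: (Rk_strong_basisP (lB lq')) => [[b [_ ->]] | [j [c [_ Bc_c q'c]]] | //].
  by rewrite emb_ne ?scaler0 // => i0i; apply: ii0.
by rewrite q'c /= E_off_i0 // addr0 emb_ne ?scaler0 //; apply: i_fresh lq' Bc_c q'c.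
Qed.

Lemma emb_shift_coeff_eq0 j c q : List.In q l -> j <> i0 -> Bc j c ->
  q.2 = kadd RK (emb c) E -> q.1 = 0.
Proof.
move=> lq ji0 Bc_c qc; apply: (Rk_coeff_eq0 (i := j) (Bi := Bc j)
  (Q := fun x => exists c, Bc j c /\ x = kadd RK (emb c) E) (@Bc_independent j) nd) => //.
- by move=> q' _ [c' [Bc_c' ->]] /=; rewrite emb_self E_off_i0 // addr0.
- by move=> q1 q2 _ _ [c1 [_ ->]] [c2 [_ ->]] /=; rewrite !emb_self E_off_i0 // !addr0 => ->.
- move=> q' lq' nQ.
  case: (Rk_strong_basisP (lB lq')) => [[b [_ ->]] | [j' [c' [_ Bc_c' q'c']]] | q'1].
  + by rewrite emb_ne ?scaler0 // => i0j; apply: ji0.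
  + case: (classic (j' = j)) => [jj | jj].
      by subst j'; case: nQ; exists c'.
    by rewrite q'c' /= emb_ne // E_off_i0 // addr0 scaler0.
  + by rewrite (one_off_shift_coeff_eq0 lq' q'1) scale0r.
- by exists c.
Qed.

Lemma B0_coeff_eq0 b q : List.In q l -> B0 b -> q.2 = emb b -> q.1 = 0.
Proof.
move=> lq B0b qb; apply: (Rk_coeff_eq0 (i := i0) (Bi := B0)
  (Q := fun x => exists b, B0 b /\ x = emb b) B0_ind nd) => //; last by exists b.
- by move=> q' _ [b' [B0b' ->]]; rewrite emb_self.
- by move=> q1 q2 _ _ [b1 [_ ->]] [b2 [_ ->]]; rewrite !emb_self => ->.
move=> q' lq' nQ.
case: (Rk_strong_basisP (lB lq')) => [[b' [B0b' q'b']] | [j [c [ji0 Bc_c q'c]]] | q'1].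
- by case: nQ; exists b'.
- by rewrite (emb_shift_coeff_eq0 lq' ji0 Bc_c q'c) scale0r.
- by rewrite (one_off_shift_coeff_eq0 lq' q'1) scale0r.
Qed.

End StrongIndependence.

Lemma Rk_strong_basis_independent : kindependent (A := AR i0) B0 ->
  kindependent (A := RK) Rk_strong_basis.
Proof.
move=> B0_ind l nd lB sum0 q lq.
case: (Rk_strong_basisP (lB q lq)) => [[b [B0b qb]] | [j [c [ji0 Bc_c qc]]] | q1].
- exact: (B0_coeff_eq0 B0_ind nd lB sum0 lq B0b qb).
- exact: (emb_shift_coeff_eq0 nd lB sum0 lq ji0 Bc_c qc).
- exact: (one_off_shift_coeff_eq0 nd lB sum0 lq q1).
Qed.

Lemma Rk_strong_basis_conormed : conormed (A := AR i0) B0 -> B0 e ->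
  socle_next (A := AR i0) (fun x => x = 0) e -> conormed (A := RK) Rk_strong_basis.
Proof.
move=> B0_conormed B0e e_soc.
have [[_ B0_ind _] _] := B0_conormed.
apply: (conormed_of_spans (Rk_laws R) (Rk_semiartinian infI Rsemi) Rk_strong_basis_in
  (Rk_strong_basis_independent B0_ind)).
move=> S stS; case: (classic (ksubset (A := RK) S (fun x => x = kzero RK))) => [S0 | nS0].
  by move=> x /S0 ->; apply: kspan0.
have [_ _ SD SZ _] := Rk_socle_term_right_ideal stS.
pose X := fun b => Rk_strong_basis b /\ S b.
have SE : S E.
  apply: (socle_next0_sub (kaddr0 (Rk_laws R)) stS nS0).
  apply: socle_next_emb; first exact: socle_term0.
  by rewrite slice_zero.
have XE : kspan (A := RK) X E by apply: (kspan_base (Rk_laws R)); split=> //; left; exists e.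
have unshift p : Rk_basis p -> p i0 = 0 -> S p -> kspan (A := RK) X p.
  move=> Bp p0 Sp; have -> : p = kadd RK (kadd RK p E) (kscale RK (-1) E).
    by apply: Rk_ext => j /=; rewrite scaleN1r addrK.
  apply: (kspanD (Rk_laws R)); last exact: (kspanZ (Rk_laws R)).
  by apply: (kspan_base (Rk_laws R)); split; [right; exists p | apply: SD].
apply: socle_term_sub => //.
- exact: kspan0.
- by move=> a b; apply: (kspanD (Rk_laws R)).
- by move=> k a; apply: (kspanZ (Rk_laws R)).
- move=> i y Sy; case: (classic (i = i0)) => [ii0 | ii0].
    subst i; apply: (slice_span stS B0_conormed _ Sy) => b B0b Sb.
    by apply: (kspan_base (Rk_laws R)); split=> //; left; exists b.
  apply: (slice_span stS (Bc_conormed i) _ Sy) => b Bc_b Sb; apply: unshift => //.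
    by left; exists i, b.
  by apply: emb_ne => i0i; apply: ii0.
- move=> Sleaves; apply: unshift; [by right | exact: one_off_in | exact: socle_term_one_off].
Qed.

End RkBases.

(** * The case R_i = K *)

Section RegularField.
Variable K : fieldType.
Local Notation AK := (alg_kalg K^o).

Lemma regular_right_ideal_full (S : K^o -> Prop) a : right_ideal (A := AK) S -> S a -> a != 0 ->
  forall y, S y.
Proof.
move=> [_ _ _ _ SM] Sa a0 y; have := SM a (a^-1 * y : K) Sa I.
by rewrite /= mulVKf.
Qed.

Lemma regular_socle_next_zero (y : K^o) : socle_next (A := AK) (fun x => x = 0) y.
Proof.
apply: (minimal_over_sub_socle_next (alg_kalg_laws K^o) (S := fun x => x = 0)
  (J := fun _ => True)) => //.
split=> //.
  by exists 1; split=> //; apply/eqP; rewrite oner_eq0.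
move=> J Jideal _ _.
case: (classic (ksubset (A := AK) J (fun x => x = 0))) => [| /not_ksubset [a [Ja a0]]].
  by left.
by right=> z _; apply: regular_right_ideal_full Jideal Ja _ _; apply/eqP.
Qed.

Lemma regular_semiartinian : semiartinian AK.
Proof.
exists (socle_next (A := AK) (fun x => x = 0)); split; first exact/socle_termS/socle_term0.
by move=> x; split=> // _; apply: regular_socle_next_zero.
Qed.

Lemma regular_kspan_one (y : K^o) : kspan (A := AK) (fun b => b = 1) y.
Proof.
exists [:: (y, 1)]; split; first by move=> p [<- | []].
by rewrite /ksum /= addr0 /GRing.scale /= mulr1.
Qed.

Lemma regular_conormed : conormed (A := AK) (fun b => b = 1).
Proof.
have one_basis : kbasis (A := AK) (fun b => b = 1).
  by split=> //; [exact: kindependent_one | move=> x; split=> // _; apply: regular_kspan_one].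
split=> // S stS; have Sideal := socle_term_right_ideal (alg_kalg_laws K^o) stS.
case: (classic (ksubset (A := AK) S (fun x => x = 0))) => [S0 | /not_ksubset [a [Sa a0]]].
  exists (fun _ => False); split=> //; split=> //; first by move=> l _ lF _ p /lF.
  move=> x; split; first by move/S0 => ->; exists [::].
  by case=> [[| p l] [lF ->]]; [case: Sideal | case: (lF p (or_introl erefl))].
have Sfull := regular_right_ideal_full Sideal Sa (introN eqP a0).
exists (fun b => b = 1); split=> //; case: one_basis => _ one_ind one_span.
by split=> // x; rewrite -one_span; split.
Qed.

Lemma regular_one_strong : strong_multiplicative (A := AK) (fun b => b = 1).
Proof. by move=> b b' -> ->; rewrite /= mulr1. Qed.

Lemma regular_one_multiplicative : Defs.multiplicative (A := AK) (fun b => b = 1).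
Proof. by move=> b b' -> ->; right; rewrite /= mulr1. Qed.

End RegularField.

Section Existence.
Variables (K : fieldType) (I : Type) (R : I -> algType K).
Hypothesis infI : infinite_type I.
Hypothesis Rsemi : forall i, semiartinian (alg_kalg (R i)).
Variable Bc : forall i, R i -> Prop.
Arguments Bc : clear implicits.
Hypothesis Bc_conormed : forall i, conormed (A := alg_kalg (R i)) (Bc i).
Hypothesis Bc_mult : forall i, Defs.multiplicative (A := alg_kalg (R i)) (Bc i).

Lemma Rk_conormed_multiplicative_basis :
  exists B, conormed B /\ Defs.multiplicative (A := Rk R) B.
Proof.
have [F FS] := cofin_unital_bound R infI.
by exists (Rk_basis F Bc); split; [apply: Rk_basis_conormed | apply: Rk_basis_multiplicative].
Qed.

Lemma Rk_conormed_strong_basis i0 (B0 : R i0 -> Prop) (e : R i0) :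
  conormed (A := alg_kalg (R i0)) B0 -> strong_multiplicative (A := alg_kalg (R i0)) B0 ->
  B0 e -> e * e = e -> socle_next (A := alg_kalg (R i0)) (fun x => x = 0) e ->
  exists B, conormed B /\ strong_multiplicative (A := Rk R) B.
Proof.
move=> B0_conormed B0_strong B0e ee e_soc; have [F FS] := cofin_unital_bound R infI.
have FS' : forall S, socle_term (A := Rk R) S -> leaves_dsum S ->
    forall i, ~ List.In i (i0 :: F) -> slice S i 1.
  by move=> S stS Sleaves i ni; apply: FS => // iF; apply: ni; right.
exists (Rk_strong_basis (i0 :: F) Bc B0 e); split.
  by apply: Rk_strong_basis_conormed => //; left.
by apply: Rk_strong_basis_strong => //; left.
Qed.

End Existence.

End ConormedBases.

Import ConormedBases.

Local Open Scope ring_scope.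

Theorem lemma6p4 (K : fieldType) :
  (forall (I : Type) (R : I -> algType K),
     infinite_type I ->
     (forall i, semiartinian (alg_kalg (R i)) /\
                exists B, conormed B /\ multiplicative (A := alg_kalg (R i)) B) ->
     (semiartinian (Rk R) /\
      exists B, conormed B /\ multiplicative (A := Rk R) B) /\
     (forall (i0 : I) (B0 : R i0 -> Prop) (e : R i0),
        conormed (A := alg_kalg (R i0)) B0 -> strong_multiplicative (A := alg_kalg (R i0)) B0 ->
        B0 e -> e * e = e -> e != 0 ->
        socle_next (A := alg_kalg (R i0)) (fun x => x = 0) e ->
        exists B, conormed B /\ strong_multiplicative (A := Rk R) B)) /\
  (forall I : Type, infinite_type I ->
     semiartinian (Rk (fun _ : I => K^o)) /\
     exists B, conormed B /\ strong_multiplicative (A := Rk (fun _ : I => K^o)) B).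
Proof.
split=> [I R infI Rhyp | I infI].
  have Rsemi i := (Rhyp i).1.
  have [Bc Bc_spec] := dependent_choice (fun i => (Rhyp i).2).
  have Bc_conormed i := (Bc_spec i).1; have Bc_mult i := (Bc_spec i).2.
  split; first by split; [apply: Rk_semiartinian | apply: Rk_conormed_multiplicative_basis Bc_mult].
  move=> i0 B0 e B0_conormed B0_strong B0e ee _.
  exact: (Rk_conormed_strong_basis infI Rsemi Bc_conormed Bc_mult B0_conormed B0_strong B0e ee).
have Rsemi (i : I) := regular_semiartinian K.
split; first exact: Rk_semiartinian.
have [f _] := infI.
apply: (Rk_conormed_strong_basis (i0 := f 0%N) infI Rsemi (fun i => regular_conormed K)
  (fun i => @regular_one_multiplicative K) (regular_conormed K) (@regular_one_strong K)) => //.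
- exact: GRing.mulr1.
- exact: regular_socle_next_zero.
Qed.
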